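(* Let $p\in[1,\infty]$ with Hölder conjugate $q$, let $R_0\in\mathbb{R}^{\mathcal{S}\times\mathcal{A}}$, $\alpha>0$, and $\mathcal{R}_p=\{R:\|R-R_0\|_p\le\alpha\}$. Then for every stationary policy $\pi\in\Pi$, the robust return satisfies $$\rho^\pi_{\mathcal{R}_p}:=\min_{R\in\mathcal{R}_p}\rho^\pi_R=\rho^\pi_{R_0}-\alpha\|d^\pi\|_q.$$
   Context: Finite MDP with finite state space $\mathcal{S}$, finite action space $\mathcal{A}$, transition kernel $P$, discount $\gamma\in[0,1)$, initial distribution $\mu$ with $\mu(s)>0$ for all $s$. $\Pi$ is the set of stationary randomized policies, $\pi_s(a)=\pi(a|s)$, $P^\pi(s'|s)=\sum_a\pi_s(a)P(s'|s,a)$. Occupancy measures: $d^\pi=\mu^\top(I-\gamma P^\pi)^{-1}\in\mathbb{R}^{\mathcal{S}}$, $d^\pi(s,a)=d^\pi(s)\pi_s(a)$; norms $\|\cdot\|_p,\|\cdot\|_q$ are taken over $\mathcal{S}\times\mathcal{A}$. Return: $\rho^\pi_R=\sum_{s,a}d^\pi(s,a)R(s,a)$. *)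

From HB Require Import structures.
From mathcomp Require Import all_boot all_order all_algebra.
From mathcomp Require Import all_classical all_reals ereal exp.
Set Implicit Arguments. Unset Strict Implicit. Unset Printing Implicit Defensive.
Import Order.TTheory GRing.Theory Num.Theory.
Local Open Scope ring_scope.

Section Defs.
Variable R : realType.

Definition lpnorm (T : finType) (p : \bar R) (f : T -> R) : R :=
  match p with
  | r%:E => (\sum_(x : T) `|f x| `^ r) `^ r^-1
  | +oo%E => \big[Num.max/0]_(x : T) `|f x|
  | -oo%E => 0
  end.

(* Hölder conjugate q of p: 1/p + 1/q = 1 (1 <-> +oo). *)
Definition hconj (p : \bar R) : \bar R :=
  match p with
  | r%:E => if r == 1 then +oo%E else (r / (r - 1))%:E
  | +oo%E => 1%:E
  | -oo%E => -oo%E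
  end.

Variables (nS nA : nat).

Definition Ppi (P : 'I_nS -> 'I_nA -> 'I_nS -> R) (pi : 'I_nS -> 'I_nA -> R)
  : 'M[R]_nS := \matrix_(s, s') \sum_(a < nA) pi s a * P s a s'.

Definition dstate (P : 'I_nS -> 'I_nA -> 'I_nS -> R) (gamma : R)
  (mu : 'rV[R]_nS) (pi : 'I_nS -> 'I_nA -> R) : 'rV[R]_nS :=
  mu *m invmx (1%:M - gamma *: Ppi P pi).

Definition dsa P gamma mu pi (x : 'I_nS * 'I_nA) : R :=
  dstate P gamma mu pi 0 x.1 * pi x.1 x.2.

Definition ret P gamma mu pi (Rw : 'I_nS * 'I_nA -> R) : R :=
  \sum_(x : 'I_nS * 'I_nA) dsa P gamma mu pi x * Rw x.

End Defs.

From HB Require Import structures.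
From mathcomp Require Import all_boot all_order all_algebra.
From mathcomp Require Import all_classical all_reals ereal exp.
From mathcomp Require Import ring.
Import Order.TTheory GRing.Theory Num.Theory.
Local Open Scope ring_scope.
Set Implicit Arguments. Unset Strict Implicit.

(* The return is linear in the reward: rho_R - rho_R0 = <d, R - R0> with d the
   occupancy measure.  Hence the robust return is rho_R0 plus the minimum of the
   linear form e |-> <d, e> over the l_p ball of radius alpha, and that minimum
   is -alpha ||d||_q: Hoelder's inequality (Young's inequality summed over the
   normalized vectors) is the lower bound, attained at
   e = -alpha sgn(d) (|d| / ||d||_q)^(q-1), at -alpha sgn(d) when p = +oo, and
   at a signed point mass on an argmax of |d| when p = 1.  No property of the
   MDP is used. *)

Section LpNorm.
Variables (R : realType) (T : finType).
Implicit Types (r alpha : R) (f e : T -> R).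

Lemma lpnorm_ge0 (p : \bar R) f : 0 <= lpnorm p f.
Proof. by case: p => [r| |]; cbn [lpnorm]; rewrite ?powR_ge0 ?bigmax_ge_id. Qed.

Lemma eq_lpnorm (p : \bar R) f e : f =1 e -> lpnorm p f = lpnorm p e.
Proof.
move=> fe; case: p => [r| |]; cbn [lpnorm]; [congr (_ `^ _) | | by []];
  by apply: eq_bigr => x _; rewrite fe.
Qed.

Lemma lpnorm_fin_eq0 r f : lpnorm r%:E f = 0 -> f =1 (fun=> 0).
Proof.
move=> /powR_eq0_eq0/eqP; rewrite psumr_eq0 => [/allP f0 x|x _]; last exact: powR_ge0.
by have /eqP/powR_eq0_eq0/normr0_eq0 := f0 x (mem_index_enum x).
Qed.

Lemma lpnorm_fin0 r : r != 0 -> lpnorm r%:E (fun _ : T => 0 : R) = 0.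
Proof.
move=> r0; cbn [lpnorm]; rewrite big1 ?powR0 ?invr_neq0 // => x _.
by rewrite normr0 powR0.
Qed.

Lemma lpnorm_fin_powR r f : r != 0 -> lpnorm r%:E f `^ r = \sum_x `|f x| `^ r.
Proof.
by move=> r0; rewrite /lpnorm -powRrM mulVf // powRr1 // sumr_ge0 // => x _; rewrite powR_ge0.
Qed.

Lemma sum_powR_normalized r f : r != 0 -> 0 < lpnorm r%:E f ->
  \sum_x (`|f x| / lpnorm r%:E f) `^ r = 1.
Proof.
move=> r0 fpos; set B := lpnorm r%:E f.
have -> : \sum_x (`|f x| / B) `^ r = (\sum_x `|f x| `^ r) / B `^ r.
  rewrite mulr_suml; apply: eq_bigr => x _.
  rewrite powRM ?invr_ge0 ?lpnorm_ge0 //; congr (_ * _).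
  by rewrite -powR_inv1 ?lpnorm_ge0 // powRAC powR_inv1 // powR_ge0.
by rewrite -lpnorm_fin_powR // divff // gt_eqF // powR_gt0.
Qed.

Lemma lpnorm1E f : lpnorm 1%:E f = \sum_x `|f x|.
Proof.
rewrite /lpnorm invr1 powRr1; last by rewrite sumr_ge0 // => x _; rewrite powR_ge0.
by apply: eq_bigr => x _; rewrite powRr1.
Qed.

Lemma lpnorm_oo_ge f x : `|f x| <= lpnorm +oo%E f.
Proof. exact: le_bigmax. Qed.

Lemma lpnorm_oo_le f alpha : 0 <= alpha -> (forall x, `|f x| <= alpha) ->
  lpnorm +oo%E f <= alpha.
Proof. by move=> a0 fa; apply: bigmax_le. Qed.

Lemma lpnorm_oo_attained f :
  lpnorm +oo%E f = 0 \/ exists j, lpnorm +oo%E f = `|f j|.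
Proof.
have := lexx (lpnorm +oo%E f); rewrite {2}/lpnorm => /bigmax_geP[le0|[j _ lej]].
  by left; apply/eqP; rewrite eq_le le0 lpnorm_ge0.
by right; exists j; apply/eqP; rewrite eq_le lej lpnorm_oo_ge.
Qed.

End LpNorm.

Section HolderFinite.
Variables (R : realType) (T : finType) (r s : R).
Hypotheses (r_gt0 : 0 < r) (s_gt0 : 0 < s) (rs_conj : r^-1 + s^-1 = 1).
Implicit Types (alpha : R) (d e : T -> R).

Lemma holder_normalized (F G : T -> R) :
  \sum_x F x `^ s = 1 -> \sum_x G x `^ r = 1 ->
  (forall x, 0 <= F x) -> (forall x, 0 <= G x) -> \sum_x F x * G x <= 1.
Proof.
move=> F1 G1 F_ge0 G_ge0; have sr_conj : s^-1 + r^-1 = 1 by rewrite addrC.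
apply: (@le_trans _ _ (\sum_x (F x `^ s / s + G x `^ r / r))).
  apply: ler_sum => x _.
  exact: conjugate_powR (F_ge0 x) (G_ge0 x) s_gt0 r_gt0 sr_conj.
by rewrite big_split /= -!mulr_suml F1 G1 !mul1r sr_conj.
Qed.

Lemma holder_fin d e :
  \sum_x `|d x| * `|e x| <= lpnorm s%:E d * lpnorm r%:E e.
Proof.
have [B0|B_neq0] := eqVneq (lpnorm s%:E d) 0.
  rewrite B0 mul0r big1 ?lexx // => x _.
  by rewrite (lpnorm_fin_eq0 B0) normr0 mul0r.
have [A0|A_neq0] := eqVneq (lpnorm r%:E e) 0.
  rewrite A0 mulr0 big1 ?lexx // => x _.
  by rewrite (lpnorm_fin_eq0 A0) normr0 mulr0.
have B_gt0 : 0 < lpnorm s%:E d by rewrite lt0r B_neq0 lpnorm_ge0.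
have A_gt0 : 0 < lpnorm r%:E e by rewrite lt0r A_neq0 lpnorm_ge0.
have := holder_normalized
  (sum_powR_normalized (lt0r_neq0 s_gt0) B_gt0) (sum_powR_normalized (lt0r_neq0 r_gt0) A_gt0).
(* generalized so that [field] and rewriting never unfold [lpnorm] *)
move: (lpnorm s%:E d) (lpnorm r%:E e) B_gt0 A_gt0 => B A B_gt0 A_gt0 holder.
have -> : \sum_x `|d x| * `|e x| = B * A * \sum_x (`|d x| / B) * (`|e x| / A).
  rewrite mulr_sumr; apply: eq_bigr => x _.
  by field; rewrite !lt0r_neq0.
rewrite -[leRHS]mulr1 ler_pM2l ?mulr_gt0 //.
by apply: holder => x; rewrite divr_ge0 ?normr_ge0 ?ltW.
Qed.

Lemma conj_exponent_mul : (s - 1) * r = s.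
Proof.
have sr : s + r = r * s.
  rewrite -[RHS]mul1r -rs_conj; field.
  by rewrite !lt0r_neq0.
by rewrite mulrBl mul1r mulrC -sr addrK.
Qed.

Lemma dual_witness_fin d alpha : 0 <= alpha ->
  exists2 e, lpnorm r%:E e <= alpha & \sum_x d x * e x = - (alpha * lpnorm s%:E d).
Proof.
move=> alpha_ge0.
have [B0|B_neq0] := eqVneq (lpnorm s%:E d) 0.
  exists (fun=> 0); first by rewrite lpnorm_fin0 ?lt0r_neq0.
  by rewrite B0 mulr0 oppr0 big1 // => x _; rewrite mulr0.
have B_gt0 : 0 < lpnorm s%:E d by rewrite lt0r B_neq0 lpnorm_ge0.
have := sum_powR_normalized (lt0r_neq0 s_gt0) B_gt0.
move: (lpnorm s%:E d) B_gt0 => B B_gt0 sum_u.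
have u_ge0 x : 0 <= `|d x| / B by rewrite divr_ge0 ?normr_ge0 ?ltW.
exists (fun x => - ((-1) ^+ (d x < 0)%R * (alpha * (`|d x| / B) `^ (s - 1)))).
  cbn [lpnorm].
  have -> : \sum_x `| - ((-1) ^+ (d x < 0)%R * (alpha * (`|d x| / B) `^ (s - 1)))| `^ r
      = alpha `^ r * \sum_x (`|d x| / B) `^ s.
    rewrite mulr_sumr; apply: eq_bigr => x _.
    rewrite normrN normrMsign ger0_norm ?mulr_ge0 ?powR_ge0 //.
    by rewrite powRM ?powR_ge0 // -powRrM conj_exponent_mul.
  by rewrite sum_u mulr1 -powRrM mulfV ?lt0r_neq0 // powRr1 ?lexx.
have -> : - (alpha * B) = \sum_x - (alpha * B * (`|d x| / B) `^ s).
  by rewrite sumrN -mulr_sumr sum_u mulr1.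
apply: eq_bigr => x _.
rewrite -(mulr_powRB1 (u_ge0 x) s_gt0).
move: ((`|d x| / B) `^ (s - 1)) => v.
rewrite (normrEsign (d x)).
by field; rewrite lt0r_neq0.
Qed.

End HolderFinite.

Section HolderConjugate.
Variables (R : realType) (T : finType).
Implicit Types (alpha : R) (d e : T -> R).

Lemma holder_oo_1 d e : \sum_x `|d x| * `|e x| <= lpnorm +oo%E d * lpnorm 1%:E e.
Proof.
rewrite lpnorm1E mulr_sumr; apply: ler_sum => x _.
by apply: ler_wpM2r; [exact: normr_ge0 | exact: lpnorm_oo_ge].
Qed.

Lemma dual_witness_oo d alpha : 0 <= alpha ->
  exists2 e, lpnorm +oo%E e <= alpha & \sum_x d x * e x = - (alpha * lpnorm 1%:E d).
Proof.
move=> alpha_ge0; exists (fun x => - ((-1) ^+ (d x < 0)%R * alpha)).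
  apply: lpnorm_oo_le => // x.
  by rewrite normrN normrMsign ger0_norm ?lexx.
rewrite lpnorm1E mulr_sumr -sumrN; apply: eq_bigr => x _.
rewrite normrEsign; move: ((-1) ^+ (d x < 0)%R) => sg.
by ring.
Qed.

Lemma dual_witness_1 d alpha : 0 <= alpha ->
  exists2 e, lpnorm 1%:E e <= alpha & \sum_x d x * e x = - (alpha * lpnorm +oo%E d).
Proof.
move=> alpha_ge0; have [->|[j ->]] := lpnorm_oo_attained d.
  exists (fun=> 0).
    by rewrite lpnorm1E big1 // => x _; rewrite normr0.
  by rewrite mulr0 oppr0 big1 // => x _; rewrite mulr0.
exists (fun x => if x == j then - ((-1) ^+ (d j < 0)%R * alpha) else 0).
  rewrite lpnorm1E (eq_bigr (fun x => if x == j then alpha else 0)).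
    by rewrite -big_mkcond big_pred1_eq lexx.
  move=> x _; case: eqP => _; last exact: normr0.
  by rewrite normrN normrMsign ger0_norm.
rewrite (eq_bigr (fun x => if x == j then d j * - ((-1) ^+ (d j < 0)%R * alpha) else 0)).
  rewrite -big_mkcond big_pred1_eq.
  rewrite normrEsign; move: ((-1) ^+ (d j < 0)%R) => sg.
  by ring.
by move=> x _; case: eqP => [->|_]; rewrite ?mulr0.
Qed.

Lemma hconj_fin (r : R) : 1 < r ->
  exists2 s, hconj r%:E = s%:E & 0 < s /\ r^-1 + s^-1 = 1.
Proof.
move=> r_gt1; have r_neq0 : r != 0 by rewrite lt0r_neq0 // (lt_trans ltr01).
have r1_gt0 : 0 < r - 1 by rewrite subr_gt0.
exists (r / (r - 1)); first by cbn [hconj]; rewrite gt_eqF.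
split; first by rewrite divr_gt0 // (lt_trans ltr01).
by field; rewrite r_neq0 lt0r_neq0.
Qed.

Lemma holder_hconj (p : \bar R) d e : (1%:E <= p)%E ->
  \sum_x `|d x| * `|e x| <= lpnorm (hconj p) d * lpnorm p e.
Proof.
case: p => [r| |] p_ge1; last by rewrite leeNy_eq in p_ge1.
- rewrite lee_fin in p_ge1; have [<-|r_neq1] := eqVneq 1 r.
    by cbn [hconj]; rewrite eqxx; exact: holder_oo_1.
  have r_gt1 : 1 < r by rewrite lt_neqAle r_neq1 p_ge1.
  have [s -> [s_gt0 rs_conj]] := hconj_fin r_gt1.
  by apply: holder_fin => //; rewrite (lt_trans ltr01).
- rewrite mulrC; under eq_bigr do rewrite mulrC.
  exact: holder_oo_1.
Qed.

Lemma dual_witness_hconj (p : \bar R) d alpha : (1%:E <= p)%E -> 0 <= alpha ->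
  exists2 e, lpnorm p e <= alpha & \sum_x d x * e x = - (alpha * lpnorm (hconj p) d).
Proof.
case: p => [r| |] p_ge1 alpha_ge0; last by rewrite leeNy_eq in p_ge1.
- rewrite lee_fin in p_ge1; have [<-|r_neq1] := eqVneq 1 r.
    by cbn [hconj]; rewrite eqxx; exact: dual_witness_1.
  have r_gt1 : 1 < r by rewrite lt_neqAle r_neq1 p_ge1.
  have [s -> [s_gt0 rs_conj]] := hconj_fin r_gt1.
  by apply: dual_witness_fin => //; rewrite (lt_trans ltr01).
- exact: dual_witness_oo.
Qed.

Lemma dot_lpball_ge (p : \bar R) d e alpha : (1%:E <= p)%E -> lpnorm p e <= alpha ->
  - (alpha * lpnorm (hconj p) d) <= \sum_x d x * e x.
Proof.
move=> p_ge1 e_le; rewrite lerNl -sumrN.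
apply: le_trans (ler_norm _) _; apply: le_trans (ler_norm_sum _ _ _) _.
under eq_bigr do rewrite normrN normrM.
apply: le_trans (holder_hconj d e p_ge1) _.
by rewrite mulrC ler_wpM2r ?lpnorm_ge0.
Qed.

End HolderConjugate.

Lemma ret_sub (R : realType) (nS nA : nat) (P : 'I_nS -> 'I_nA -> 'I_nS -> R)
    (gamma : R) (mu : 'rV[R]_nS) (pi : 'I_nS -> 'I_nA -> R)
    (Rw R0 : 'I_nS * 'I_nA -> R) :
  ret P gamma mu pi Rw - ret P gamma mu pi R0
    = \sum_x dsa P gamma mu pi x * (Rw x - R0 x).
Proof. by rewrite /ret -sumrB; apply: eq_bigr => x _; rewrite mulrBr. Qed.

Theorem corollary1 (R : realType) (nS nA : nat)
  (P : 'I_nS -> 'I_nA -> 'I_nS -> R) (gamma : R) (mu : 'rV[R]_nS)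
  (pi : 'I_nS -> 'I_nA -> R)
  (p : \bar R) (R0 : 'I_nS * 'I_nA -> R) (alpha : R) :
  (forall s a s', 0 <= P s a s') ->
  (forall s a, \sum_(s' < nS) P s a s' = 1) ->
  0 <= gamma -> gamma < 1 ->
  (forall s, 0 < mu 0 s) -> \sum_(s < nS) mu 0 s = 1 ->
  (forall s a, 0 <= pi s a) -> (forall s, \sum_(a < nA) pi s a = 1) ->
  (1%:E <= p)%E -> 0 < alpha ->
  let q := hconj p in
  let inRp := fun Rw : 'I_nS * 'I_nA -> R =>
    lpnorm p (fun x => Rw x - R0 x) <= alpha in
  let v := ret P gamma mu pi R0 - alpha * lpnorm q (dsa P gamma mu pi) in
  (exists2 Rw, inRp Rw & ret P gamma mu pi Rw = v) /\
  (forall Rw, inRp Rw -> v <= ret P gamma mu pi Rw).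
Proof.
move=> _ _ _ _ _ _ _ _ p_ge1 alpha_gt0 q inRp v.
have retE Rw : ret P gamma mu pi Rw = ret P gamma mu pi R0
    + \sum_x dsa P gamma mu pi x * (Rw x - R0 x).
  by rewrite -ret_sub addrC subrK.
split.
  have [e e_le dot_e] := dual_witness_hconj (dsa P gamma mu pi) p_ge1 (ltW alpha_gt0).
  exists (fun x => R0 x + e x).
    by rewrite /inRp (@eq_lpnorm _ _ _ _ e) // => x; rewrite addrC addKr.
  rewrite retE (eq_bigr (fun x => dsa P gamma mu pi x * e x)) ?dot_e //.
  by move=> x _; rewrite addrC addKr.
move=> Rw Rw_in; rewrite retE /v lerD2l.
exact: dot_lpball_ge.
Qed.
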